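(* Let $\mathbb{X},\mathbb{Y}$ be Banach spaces, $\varphi:\mathbb{X}\to\mathbb{Y}$ a continuously differentiable mapping, $A$ a closed subset of $\mathbb{Y}$ and $\bar x\in\varphi^{-1}(A)$. Suppose that $A$ has the Shapiro first order contact property at $\varphi(\bar x)$ and that $\varphi$ is metrically regular around $\bar x$. Then $\varphi^{-1}(A)$ has the Shapiro first order contact property at $\bar x$.
   Context: $\mathbf{B}(a,\delta)$ denotes the open ball with center $a$ and radius $\delta$; $\mathbf{d}(x,D):=\inf\{\|x-y\|:y\in D\}$. ''Continuously differentiable'' means Fréchet differentiable everywhere with $x\mapsto\nabla\varphi(x)$ continuous in operator norm. For a closed set $C$ and $c\in C$, the Bouligand tangent cone $\mathbf{T}^{\mathbf B}(C,c)$ is the set of all $v$ for which there exist $v_n\to v$ and $t_n\downarrow0$ with $c+t_nv_n\in C$ for all $n$. A closed set $C$ of a Banach space has the Shapiro first order contact property at $a\in C$ if for every $\varepsilon>0$ there is $\delta>0$ such that $\mathbf{d}(x-u,\mathbf{T}^{\mathbf B}(C,u))\le\varepsilon\|x-u\|$ for all $x,u\in C\cap\mathbf{B}(a,\delta)$. A single-valued mapping $\varphi$ is metrically regular around $\bar x$ if there exist $\kappa>0$ and neighborhoods $U$ of $\bar x$ and $V$ of $\varphi(\bar x)$ such that $\mathbf{d}(x,\varphi^{-1}(y))\le\kappa\|\varphi(x)-y\|$ for all $(x,y)\in U\times V$. *)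

From HB Require Import structures.
From mathcomp Require Import all_boot all_order all_algebra.
From mathcomp Require Import all_classical all_reals all_analysis.
Set Implicit Arguments. Unset Strict Implicit. Unset Printing Implicit Defensive.
Import Order.TTheory GRing.Theory Num.Theory.
Import numFieldNormedType.Exports.
Local Open Scope classical_set_scope.
Local Open Scope ring_scope.

(* d(x, D) := inf { ||x - y|| : y in D }, valued in extended reals so that
   d(x, empty) = +oo (the usual convention). *)
Definition dist {R : realType} {X : normedModType R} (x : X) (D : set X) : \bar R :=
  ereal_inf [set (`|x - y|)%:E | y in D].

Definition bouligand_cone {R : realType} {X : normedModType R} (C : set X) (c : X) : set X :=
  [set v | exists (vn : nat -> X) (tn : nat -> R),
      [/\ vn @ \oo --> v, tn @ \oo --> (0 : R),
          (forall n, 0 < tn n), (forall n, tn n.+1 <= tn n)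
        & (forall n, C (c + tn n *: vn n))]].

Definition shapiro_contact {R : realType} {X : normedModType R} (C : set X) (a : X) : Prop :=
  forall eps : R, 0 < eps -> exists2 delta : R, 0 < delta &
    forall x u : X, C x -> C u -> `|x - a| < delta -> `|u - a| < delta ->
      (dist (x - u)%R (bouligand_cone C u) <= (eps * `|x - u|)%:E)%E.

(* Continuously differentiable: Frechet differentiable everywhere and
   x |-> 'd phi x continuous for the operator norm (unfolded:
   sup_{||h||<=1} ||'d phi x' h - 'd phi x h|| <= eps). *)
Definition cont_diff {R : realType} {X Y : normedModType R} (phi : X -> Y) : Prop :=
  (forall x, differentiable phi x) /\
  (forall x (eps : R), 0 < eps -> exists2 delta : R, 0 < delta &
     forall x', `|x' - x| < delta ->
       forall h : X, `|'d phi x' h - 'd phi x h| <= eps * `|h|).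

Definition metrically_regular {R : realType} {X Y : normedModType R}
    (phi : X -> Y) (xbar : X) : Prop :=
  exists kappa : R, 0 < kappa /\
  exists U V, nbhs xbar U /\ nbhs (phi xbar) V /\
    forall x y, U x -> V y ->
      (dist x (phi @^-1` [set y]) <= (kappa * `|phi x - y|)%:E)%E.

(* Near xbar, phi is strictly differentiable and metrically regular with
   uniform constants.  At every u near xbar, metric regularity makes the
   derivative L := 'd phi u approximately onto (each y is within |y|/2 of the
   image of a vector of norm at most (kappa + 1)|y|), hence onto with
   preimages of norm at most 2 (kappa + 1)|y| by the Graves iteration in the
   Banach space X; it also lifts tangents: if L v is tangent to A at phi u,
   then v is tangent to phi^-1(A) at u.  Given x, u in phi^-1(A) near xbar,
   the contact property of A provides a tangent w to A at phi u close to
   phi x - phi u, hence close to L (x - u); adding to x - u a preimage of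
   w - L (x - u) gives a tangent vector to phi^-1(A) at u within
   eps |x - u| of x - u. *)

From HB Require Import structures.
From mathcomp Require Import all_boot all_order all_algebra.
From mathcomp Require Import all_classical all_reals all_analysis.
From mathcomp Require Import ring lra.
Import Order.TTheory GRing.Theory Num.Theory.
Import numFieldNormedType.Exports.
Local Open Scope classical_set_scope.
Local Open Scope ring_scope.

Set Implicit Arguments.
Unset Strict Implicit.

Section NormedFacts.
Variable R : realType.

Lemma ler_norm_dist (V : normedModType R) (u v : V) : `|u| <= `|v| + `|v - u|.
Proof. by have := ler_distD v u 0; rewrite !subr0 distrC addrC. Qed.

Lemma nbhs_norm_ex (V : normedModType R) (x : V) (P : set V) :
  nbhs x P -> exists2 e : R, 0 < e & forall y, `|y - x| < e -> P y.
Proof.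
move=> /nbhs_normP [e e0 He]; exists e => // y hy; apply: He.
by rewrite /= distrC.
Qed.

Lemma continuous_norm_ex (V W : normedModType R) (f : V -> W) (x : V) :
  {for x, continuous f} -> forall e : R, 0 < e ->
  exists2 d : R, 0 < d & forall z, `|z - x| < d -> `|f z - f x| < e.
Proof.
move=> fc e e0.
have /nbhs_norm_ex [d d0 Hd] : \forall z \near x, `|f x - f z| < e.
  exact: (cvgr_dist_lt _ _ fc).
by exists d => // z /Hd; rewrite distrC.
Qed.

Lemma differentiable_remainder_le (V W : normedModType R) (f : V -> W) x :
  differentiable f x -> forall e : R, 0 < e -> exists2 d : R, 0 < d &
    forall h, `|h| < d -> `|f (x + h) - f x - 'd f x h| <= e * `|h|.
Proof.
move=> /diff_locally /eqaddoP Hf e e0.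
have /nbhs_norm_ex [d d0 Hd] := Hf e e0; exists d => // h hd.
have := Hd h; rewrite subr0 => /(_ hd) /=.
by apply: le_trans; rewrite !fctE /= opprD addrA [x + h]addrC.
Qed.

Lemma dist_le_norm (V : normedModType R) (x y : V) (D : set V) :
  D y -> (dist x D <= (`|x - y|)%:E)%E.
Proof. by move=> Dy; apply: ereal_inf_lbound; exists y. Qed.

Lemma dist_lt_ex (V : normedModType R) (x : V) (D : set V) (r : R) :
  (dist x D < r%:E)%E -> exists2 y, D y & `|x - y| < r.
Proof. by move=> /ereal_inf_lt [_ [y Dy <-]]; rewrite lte_fin; exists y. Qed.

End NormedFacts.

Section MeanValue.
Variable R : realType.

Lemma local_lipschitz_unit_interval (W : normedModType R) (p : R -> W) (c : R) :
  (forall t, 0 <= t <= 1 -> exists2 d : R, 0 < d &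
     forall s, `|s| < d -> `|p (t + s) - p t| <= c * `|s|) ->
  `|p 1 - p 0| <= c.
Proof.
move=> loc.
pose S := [set t : R | 0 <= t <= 1 /\
  forall t', 0 <= t' <= t -> `|p t' - p 0| <= c * t'].
have S0 : S 0.
  split; first by rewrite lexx ler01.
  move=> t' /andP[t0 t1]; have -> : t' = 0 by apply/le_anti; rewrite t0 t1.
  by rewrite subrr normr0 mulr0.
have supS : has_sup S by split; [exists 0 | exists 1 => t [/andP[]]].
pose sg := sup S.
have sg0 : 0 <= sg := sup_upper_bound supS S0.
have sg1 : sg <= 1 by apply: ge_sup; [exists 0 | move=> t [/andP[]]].
have [d d0 Hd] := loc sg (introT andP (conj sg0 sg1)).
have below_sg t : 0 <= t <= sg -> `|p t - p 0| <= c * t.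
  move=> /andP[t0]; rewrite le_eqVlt => /orP[/eqP ->|tsg]; last first.
    have [x [_ Sx] hx] := sup_adherent (ltac:(by rewrite subr_gt0) : 0 < sg - t) supS.
    by apply: Sx; rewrite t0 /=; rewrite -/sg in hx; lra.
  have [x [x01 Sx] hx] := sup_adherent d0 supS; rewrite -/sg in hx.
  have xsg : x <= sg := sup_upper_bound supS (conj x01 Sx).
  have x0 : 0 <= x by case/andP: x01.
  have := Hd (x - sg); rewrite (addrC sg) subrK distrC ger0_norm ?subr_ge0 //.
  move=> /(_ ltac:(lra)) near_sg.
  apply: le_trans (ler_norm_dist _ (p x - p 0)) _.
  rewrite opprB addrA subrK (_ : c * sg = c * x + c * (sg - x)); last by ring.
  by apply: lerD => //; apply: Sx; rewrite x0 lexx.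
have sg_eq1 : sg = 1.
  apply/le_anti; rewrite sg1 /= leNgt; apply/negP => sglt.
  pose s := Order.min (d / 2) (1 - sg).
  have s0 : 0 < s by rewrite lt_min divr_gt0 //= subr_gt0.
  have s1 : s <= 1 - sg by rewrite ge_min lexx orbT.
  have s2 : s <= d / 2 by rewrite ge_min lexx.
  suff : S (sg + s) by move/(sup_upper_bound supS); rewrite -/sg; lra.
  split; first by apply/andP; split; lra.
  move=> t /andP[t0 tle]; have [tsg|tsg] := leP t sg.
    by apply: below_sg; rewrite t0 tsg.
  have := Hd (t - sg); rewrite (addrC sg) subrK gtr0_norm ?subr_gt0 //.
  move=> /(_ ltac:(lra)) near_sg.
  apply: le_trans (ler_norm_dist _ (p sg - p 0)) _.
  rewrite opprB addrA subrK (_ : c * t = c * sg + c * (t - sg)); last by ring.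
  by apply: lerD; [apply: (below_sg sg); rewrite sg0 lexx | rewrite distrC].
by rewrite -[leRHS]mulr1; apply: below_sg; rewrite ler01 sg_eq1 lexx.
Qed.

Lemma mean_value_le (V W : normedModType R) (f : V -> W) (a h : V) (b : W) (eta : R) :
  (forall t, 0 <= t <= 1 -> differentiable f (a + t *: h)) ->
  (forall t, 0 <= t <= 1 -> `|'d f (a + t *: h) h - b| <= eta * `|h|) ->
  `|f (a + h) - f a - b| <= eta * `|h|.
Proof.
move=> df dfb; apply/ler_addgt0Pr => e e0.
have h1 : 0 < `|h| + 1 by rewrite ltr_wpDl.
pose e' := e / (`|h| + 1).
have e'0 : 0 < e' by rewrite divr_gt0.
pose p t := f (a + t *: h) - t *: b.
suff : `|p 1 - p 0| <= (eta + e') * `|h|.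
  rewrite /p !scale1r !scale0r oppr0 !addr0 (addrAC _ (- b)) => /le_trans; apply.
  rewrite mulrDl lerD2l /e' mulrAC ler_pdivrMr // ler_wpM2l ?lerDl //.
  exact: ltW.
apply: local_lipschitz_unit_interval => t t01.
have [d d0 Hd] := differentiable_remainder_le (df t t01) e'0.
exists (d / (`|h| + 1)); first by rewrite divr_gt0.
move=> s hs.
have hsh : `|s *: h| < d.
  rewrite normrZ; move: hs; rewrite ltr_pdivlMr // => /(le_lt_trans _); apply.
  by rewrite ler_wpM2l // lerDl.
have -> : p (t + s) - p t = (f (a + t *: h + s *: h) - f (a + t *: h)
    - 'd f (a + t *: h) (s *: h)) + s *: ('d f (a + t *: h) h - b).
  rewrite /p !scalerDl addrA [in RHS]linearZ scalerBr [RHS]addrA subrK.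
  by rewrite opprD opprB !addrA (addrAC _ (- (s *: b))) (subrK (t *: b)) (addrAC (f _)).
apply: le_trans (ler_normD _ _) _.
have -> : (eta + e') * `|h| * `|s| = e' * `|s *: h| + `|s| * (eta * `|h|).
  by rewrite normrZ; ring.
by apply: lerD; [exact: Hd | rewrite normrZ ler_wpM2l //; exact: dfb].
Qed.

End MeanValue.

Section Series.
Variable R : realType.

Lemma series_geometric_half_le (X : completeNormedModType R) (u : X^nat) (M : R) :
  (forall n, `|u n| <= M * 2^-1 ^+ n) ->
  cvgn (series u) /\ `|limn (series u)| <= 2 * M.
Proof.
move=> uM.
have M0 : 0 <= M by have := uM 0%N; rewrite expr0 mulr1; apply: le_trans.
have half_gt0 : (0 : R) < 2^-1 by rewrite invr_gt0.
have half_lt1 : `|2^-1 : R| < 1 by rewrite ger0_norm ?invf_lt1 ?ltr1n // ltW.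
have partial_le n : [normed series u] n <= 2 * M.
  have -> : 2 * M = M * (1 - 2^-1)^-1.
    by rewrite {2}(splitr 1) div1r addrK invrK mulrC.
  have sum_le := geometric_le_lim n M0 half_gt0 half_lt1.
  by apply: (le_trans _ sum_le); apply: ler_sum => k _; exact: uM.
have ncvg : cvgn [normed series u].
  apply: (series_le_cvg (v_ := geometric M 2^-1)) => [n|n|n|].
  - exact: normr_ge0.
  - exact: geometric_ge0 M0 (ltW half_gt0).
  - exact: uM.
  - exact: is_cvg_geometric_series.
split; first exact: normed_cvg.
apply: le_trans (lim_series_norm ncvg) _.
by apply: limr_le => //; apply: nearW.
Qed.

Lemma linear_onto_of_half_approx (X : completeNormedModType R) (Y : normedModType R)
    (L : {linear X -> Y}) (c : R) :
  continuous L -> 0 <= c ->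
  (forall y, exists2 h, `|h| <= c * `|y| & `|L h - y| <= `|y| / 2) ->
  forall y, exists2 x, L x = y & `|x| <= 2 * c * `|y|.
Proof.
move=> Lc c0 approx y.
have /choice[g Hg] : forall y', exists h, `|h| <= c * `|y'| /\ `|L h - y'| <= `|y'| / 2.
  by move=> y'; have [h ? ?] := approx y'; exists h.
pose res := fix res n := if n is m.+1 then res m - L (g (res m)) else y.
have res_le n : `|res n| <= `|y| * 2^-1 ^+ n.
  elim: n => [|n IH]; first by rewrite expr0 mulr1.
  rewrite /= -normrN opprB; apply: le_trans (Hg _).2 _.
  by rewrite exprS mulrCA [leLHS]mulrC ler_wpM2l // invr_ge0.
have res0 : res @ \oo --> 0.
  apply/norm_cvg0P; apply: (squeeze_cvgr _ (cvg_cst 0) (cvg_geometric _ _)).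
    by apply: nearW => n; rewrite normr_ge0; exact: res_le.
  by rewrite ger0_norm ?invf_lt1 ?ltr1n // invr_ge0.
have Lseries n : L (series (g \o res) n) = y - res n.
  elim: n => [|n IH]; first by rewrite /series /= big_geq // linear0 subrr.
  by rewrite seriesSr linearD IH /= opprB addrA addrAC.
have [n|scvg slim] := series_geometric_half_le (u := g \o res) (M := c * `|y|).
  by apply: le_trans (Hg _).1 _; rewrite -mulrA ler_wpM2l.
exists (limn (series (g \o res))); last by rewrite -mulrA.
have L_lim : L (series (g \o res) n) @[n --> \oo] --> L (limn (series (g \o res))).
  exact: continuous_cvg (Lc _) scvg.
have y_lim : L (series (g \o res) n) @[n --> \oo] --> y.
  by rewrite (eq_cvg _ _ Lseries); have := cvgB (cvg_cst y) res0; rewrite subr0; apply.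
exact: cvg_unique _ L_lim y_lim.
Qed.

End Series.

Section Cone.
Variable R : realType.

Lemma bouligand_cone_approx (V : normedModType R) (C : set V) (u v : V) :
  (forall e tau : R, 0 < e -> 0 < tau ->
     exists t z, [/\ 0 < t, t < tau, `|z - v| < e & C (u + t *: z)]) ->
  bouligand_cone C u v.
Proof.
move=> approx.
have /choice[F HF] : forall q : nat * R, exists p : R * V, 0 < q.2 ->
    [/\ 0 < p.1, p.1 < q.2, `|p.2 - v| < q.1.+1%:R^-1 & C (u + p.1 *: p.2)].
  move=> [n tau] /=; have [tau0|_] := ltP 0 tau; last by exists (0, v).
  by have [t [z [*]]] := approx _ _ (harmonic_gt0 n) tau0; exists (t, z).
(* The n-th step is below tau n; since tau (n + 1) is below the n-th step the
   steps decrease, and tau n <= 1 / (n + 1) makes them vanish. *)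
pose tau := fix tau n :=
  if n is m.+1 then Order.min (F (m, tau m)).1 m.+2%:R^-1 else 1.
have tau_gt0 n : 0 < tau n.
  elim: n => [|n IH] /=; first exact: ltr01.
  by have [t0 _ _ _] := HF (n, tau n) IH; rewrite lt_min t0 invr_gt0 ltr0n.
have tau_le n : tau n <= n.+1%:R^-1.
  case: n => [|n] /=; last by rewrite ge_min lexx orbT.
  by rewrite invr1.
pose t n := (F (n, tau n)).1; pose z n := (F (n, tau n)).2.
have Ft n : [/\ 0 < t n, t n < tau n, `|z n - v| < n.+1%:R^-1 & C (u + t n *: z n)].
  exact: HF (n, tau n) (tau_gt0 n).
have harmonic_lt (e : R) : 0 < e -> \forall n \near \oo, n.+1%:R^-1 < e.
  move=> e0; apply: (filterS _ (cvgr0_norm_lt _ (@cvg_harmonic R) _ e0)) => n /=.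
  by rewrite ger0_norm.
exists z, t; split=> [||n|n|n]; try by case: (Ft n).
- apply/cvgrPdist_lt => e /harmonic_lt; apply: filterS => n /= lt_e.
  by case: (Ft n) => _ _ zn _; rewrite distrC (lt_trans zn).
- apply/cvgrPdist_lt => e /harmonic_lt; apply: filterS => n /= lt_e.
  have [tn0 tn _ _] := Ft n.
  rewrite sub0r normrN gtr0_norm // (le_lt_trans _ lt_e) //.
  exact: le_trans (ltW tn) (tau_le n).
- have [_ tn _ _] := Ft n.+1; apply: ltW (lt_le_trans tn _).
  by rewrite /= ge_min lexx.
Qed.

Lemma bouligand_cone0 (V : normedModType R) (C : set V) (u : V) :
  C u -> bouligand_cone C u 0.
Proof.
move=> Cu; apply: bouligand_cone_approx => e tau e0 tau0.
exists (tau / 2), 0; split.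
- by rewrite divr_gt0.
- by rewrite ltr_pdivrMr // ltr_pMr // ltr1n.
- by rewrite subrr normr0.
- by rewrite scaler0 addr0.
Qed.

End Cone.

Definition metrically_regular_balls {R : realType} {X Y : normedModType R}
    (phi : X -> Y) (u : X) (kappa r s : R) :=
  forall x y, `|x - u| < r -> `|y - phi u| < s ->
    (dist x (phi @^-1` [set y]) <= (kappa * `|phi x - y|)%:E)%E.

Section RegularAtPoint.
Variables (R : realType) (X Y : normedModType R) (phi : X -> Y) (u : X) (kappa r s : R).
Hypotheses (du : differentiable phi u) (kappa_gt0 : 0 < kappa).
Hypotheses (r_gt0 : 0 < r) (s_gt0 : 0 < s).
Hypothesis reg : metrically_regular_balls phi u kappa r s.

Lemma regular_solution x y e : `|x - u| < r -> `|y - phi u| < s -> 0 < e ->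
  exists2 z, phi z = y & `|x - z| < kappa * `|phi x - y| + e.
Proof.
move=> xu yu e0; apply: dist_lt_ex; apply: le_lt_trans (reg xu yu) _.
by rewrite lte_fin ltrDl.
Qed.

Lemma diff_half_approx y :
  exists2 h, `|h| <= (kappa + 1) * `|y| & `|'d phi u h - y| <= `|y| / 2.
Proof.
(* Solve phi z = phi u + t y near u for a small t and take h := (z - u) / t. *)
have [->|y0] := eqVneq y 0.
  by exists 0; rewrite ?linear0 ?addr0 !normr0 ?mulr0 ?mul0r.
have k1 : 0 < kappa + 1 by rewrite ltr_wpDl // ltW.
pose a := (kappa + 1) * `|y|.
have y_gt0 : 0 < `|y| by rewrite normr_gt0.
have a0 : 0 < a by rewrite mulr_gt0.
have eta0 : 0 < (2 * (kappa + 1))^-1 by rewrite invr_gt0 mulr_gt0.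
have [rho rho0 rem] := differentiable_remainder_le du eta0.
pose m := Order.min rho (Order.min r s).
have m0 : 0 < m by rewrite !lt_min rho0 r_gt0 s_gt0.
have m_rho : m <= rho by rewrite ge_min lexx.
have m_s : m <= s by rewrite !ge_min lexx !orbT.
pose t := m / (2 * a).
have t0 : 0 < t by rewrite divr_gt0 // mulr_gt0.
have ta : t * a = m / 2 by rewrite /t; field; rewrite lt0r_neq0.
have ty : t * `|y| <= t * a.
  by rewrite ler_wpM2l ?(ltW t0) // /a ler_peMl // lerDr ltW.
have [z phiz uz] : exists2 z, phi z = phi u + t *: y & `|u - z| < t * a.
  have ty_s : `|phi u + t *: y - phi u| < s.
    by rewrite addrC addKr normrZ gtr0_norm //; lra.
  have [|z phiz] := regular_solution (x := u) _ ty_s (mulr_gt0 t0 y_gt0).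
    by rewrite subrr normr0.
  rewrite opprD addrA subrr add0r normrN normrZ gtr0_norm // => uz.
  by exists z => //; rewrite /a; lra.
exists (t^-1 *: (z - u)).
  by rewrite normrZ gtr0_norm ?invr_gt0 // ler_pdivrMl // distrC ltW.
have zu_rho : `|z - u| < rho by rewrite distrC; lra.
have := rem _ zu_rho; rewrite (addrC u) subrK phiz (addrC (phi u)) addrK => rem_zu.
rewrite linearZ -[y in _ - y](scalerK (lt0r_neq0 t0)) -scalerBr normrZ.
rewrite gtr0_norm ?invr_gt0 // distrC ler_pdivrMl //.
apply: le_trans rem_zu _; rewrite distrC.
apply: le_trans (ler_wpM2l (ltW eta0) (ltW uz)) _.
suff -> : (2 * (kappa + 1))^-1 * (t * a) = t * (`|y| / 2) by [].
by rewrite /a; field; rewrite lt0r_neq0.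
Qed.

Lemma regular_lift v e : 0 < e -> exists2 d : R, 0 < d &
  forall t w, 0 < t < d -> `|'d phi u v - w| < d ->
    exists2 z, phi z = phi u + t *: w & `|u + t *: v - z| < t * e.
Proof.
(* Metric regularity yields z at distance at most about
   kappa |phi (u + t v) - phi u - t w| = o(t) from u + t v. *)
move=> e0; pose q := e / 4.
have q0 : 0 < q by rewrite divr_gt0.
have v1 : 0 < `|v| + 1 by rewrite ltr_wpDl.
pose eta := q / (kappa * (`|v| + 1)).
have eta0 : 0 < eta by rewrite divr_gt0 // mulr_gt0.
have eta_def : kappa * eta * (`|v| + 1) = q.
  by rewrite /eta; field; rewrite !lt0r_neq0.
have [rho rho0 rem] := differentiable_remainder_le du eta0.
exists (Order.min 1 (Order.min (q / kappa) (Order.min (rho / (`|v| + 1))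
  (Order.min (r / (`|v| + 1)) (s / (`|'d phi u v| + 1)))))).
  by rewrite !lt_min ltr01 !divr_gt0 // ?ltr_wpDl.
move=> t w /andP[t0]; rewrite !lt_min => /and5P[_ _ trho tr ts] /and5P[w1 wq _ _ _].
have w_le : `|w| <= `|'d phi u v| + 1.
  by have := ler_norm_dist w ('d phi u v); lra.
rewrite !ltr_pdivlMr ?ltr_wpDl // in trho tr ts.
have tv_r : `|u + t *: v - u| < r by rewrite addrC addKr normrZ gtr0_norm //; nra.
have tw_s : `|phi u + t *: w - phi u| < s.
  by rewrite addrC addKr normrZ gtr0_norm //; nra.
have tq0 : 0 < t * q by rewrite mulr_gt0.
have [z phiz close] := regular_solution tv_r tw_s tq0.
exists z => //; apply: lt_le_trans close _.
have tv_rho : `|t *: v| < rho by rewrite normrZ gtr0_norm //; nra.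
have lin_err : `|phi (u + t *: v) - (phi u + t *: w)| <=
    eta * `|t *: v| + t * `|'d phi u v - w|.
  rewrite opprD addrA -[X in X - _](subrK (t *: 'd phi u v)) -addrA -scalerBr.
  apply: le_trans (ler_normD _ _) _; rewrite normrZ gtr0_norm // lerD2r.
  by rewrite -linearZ; exact: rem.
have err_v : kappa * (eta * `|t *: v|) <= t * q.
  rewrite -eta_def normrZ gtr0_norm //.
  have -> : kappa * (eta * (t * `|v|)) = t * (kappa * eta) * `|v| by ring.
  rewrite -mulrA ler_wpM2l ?(ltW t0) // ler_wpM2l ?lerDl //.
  by rewrite mulr_ge0 ?ltW.
have err_w : kappa * (t * `|'d phi u v - w|) <= t * q.
  rewrite mulrCA ler_wpM2l ?(ltW t0) // mulrC; apply: ltW.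
  by rewrite -ltr_pdivlMr.
have := ler_wpM2l (ltW kappa_gt0) lin_err; rewrite mulrDr => err.
have te : t * e = 4 * (t * q) by rewrite /q; field.
lra.
Qed.

Lemma regular_tangent_preimage (A : set Y) v :
  bouligand_cone A (phi u) ('d phi u v) -> bouligand_cone (phi @^-1` A) u v.
Proof.
move=> [wn [tn [wn_cvg tn_cvg tn_gt0 _ Awn]]].
apply: bouligand_cone_approx => e tau e0 tau0.
have [d d0 lift] := regular_lift v e0.
have [n [wn_near tn_near]] : exists n,
    `|'d phi u v - wn n| < d /\ `|0 - tn n| < Order.min d tau.
  have wn_d : \forall k \near \oo, `|'d phi u v - wn k| < d.
    exact: (cvgr_dist_lt _ _ wn_cvg).
  have tn_d : \forall k \near \oo, `|0 - tn k| < Order.min d tau.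
    by apply: (cvgr_dist_lt _ _ tn_cvg); rewrite lt_min d0.
  exact: filter_ex (filterI wn_d tn_d).
move: tn_near; rewrite sub0r normrN gtr0_norm // lt_min => /andP[tn_d tn_tau].
have [z phiz close] := lift (tn n) (wn n) (introT andP (conj (tn_gt0 n) tn_d)) wn_near.
have tn_neq0 := lt0r_neq0 (tn_gt0 n).
exists (tn n), ((tn n)^-1 *: (z - u)); split => //.
- rewrite -[v in _ - v](scalerK tn_neq0) -scalerBr normrZ gtr0_norm ?invr_gt0 //.
  rewrite ltr_pdivrMl // distrC (_ : tn n *: v - (z - u) = u + tn n *: v - z) //.
  by rewrite opprB addrCA addrA.
- by rewrite /preimage /= scalerKV // addrC subrK phiz; exact: Awn.
Qed.

End RegularAtPoint.

Section NearReference.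
Variables (R : realType) (X Y : normedModType R) (phi : X -> Y) (xbar : X).

Lemma metrically_regular_near : {for xbar, continuous phi} ->
  metrically_regular phi xbar ->
  exists kappa r s : R, [/\ 0 < kappa, 0 < r, 0 < s &
    forall u, `|u - xbar| < r -> metrically_regular_balls phi u kappa r s].
Proof.
move=> phic [kappa [k0 [U [V [NU [NV reg]]]]]].
have [rU rU0 inU] := nbhs_norm_ex NU.
have [sV sV0 inV] := nbhs_norm_ex NV.
have sV2 : 0 < sV / 2 by rewrite divr_gt0.
have [rc rc0 phi_near] := continuous_norm_ex phic sV2.
pose r := Order.min rU rc / 2.
have r_rU : r + r <= rU by rewrite /r -splitr ge_min lexx.
have min_pos : 0 < Order.min rU rc by rewrite lt_min rU0.
have r_rc : r < rc.
  have : Order.min rU rc <= rc by rewrite ge_min lexx orbT.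
  rewrite /r; lra.
exists kappa, r, (sV / 2); split => // [|u ur x y xu yu].
  by rewrite divr_gt0.
apply: reg; [apply: inU | apply: inV].
  by apply: le_lt_trans (ler_distD u x xbar) _; lra.
have := phi_near u (lt_trans ur r_rc).
by have := ler_distD (phi u) y (phi xbar); lra.
Qed.

Hypothesis phi_C1 : cont_diff phi.

Lemma cont_diff_strict eta : 0 < eta -> exists2 d : R, 0 < d &
  forall x u, `|x - xbar| < d -> `|u - xbar| < d ->
    `|phi x - phi u - 'd phi u (x - u)| <= eta * `|x - u|.
Proof.
case: phi_C1 => dphi dphi_cont eta0.
have eta2 : 0 < eta / 2 by rewrite divr_gt0.
have [d dpos dphi_near] := dphi_cont xbar _ eta2.
exists (d / 3); first by rewrite divr_gt0.
move=> x u xd ud; have := @mean_value_le _ _ _ phi u (x - u) ('d phi u (x - u)) eta.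
rewrite (addrC u) subrK; apply=> [t _|t /andP[t0 t1]]; first exact: dphi.
have segment_d : `|u + t *: (x - u) - xbar| < d.
  rewrite addrAC; apply: le_lt_trans (ler_normD _ _) _.
  have : `|t *: (x - u)| <= `|x - u| by rewrite normrZ ger0_norm // ler_piMl.
  by have := ler_distD xbar x u; rewrite [`|xbar - u|]distrC; lra.
apply: le_trans (ler_distD ('d phi xbar (x - u)) _ _) _.
have := dphi_near _ segment_d (x - u); have := dphi_near u (ltac:(lra)) (x - u).
by rewrite [`|'d phi xbar _ - _|]distrC; lra.
Qed.

Lemma cont_diff_lipschitz_near : exists2 M : R, 0 < M & exists2 d : R, 0 < d &
  forall x u, `|x - xbar| < d -> `|u - xbar| < d -> `|phi x - phi u| <= M * `|x - u|.
Proof.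
case: (phi_C1) => dphi dphi_cont.
have [k k0 dphi_bound] := linear_lipschitz (diff_continuous (dphi xbar)).
have [d1 d10 dphi_near] := dphi_cont xbar 1 ltr01.
have [d2 d20 strict] := cont_diff_strict ltr01.
exists (k + 2); first by rewrite ltr_wpDl // ltW.
exists (Order.min d1 d2); first by rewrite lt_min d10.
move=> x u; rewrite !lt_min => /andP[_ xd2] /andP[ud1 ud2].
have := strict _ _ xd2 ud2; have := dphi_near _ ud1 (x - u).
have := dphi_bound (x - u); have := ler_norm_dist (phi x - phi u) ('d phi u (x - u)).
have := ler_norm_dist ('d phi u (x - u)) ('d phi xbar (x - u)).
by rewrite [`|'d phi u _ - _|]distrC [`|'d phi xbar _ - _|]distrC; lra.
Qed.

End NearReference.

Lemma dist_tangent_preimage_le (R : realType) (X : completeNormedModType R)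
    (Y : normedModType R) (phi : X -> Y) (A : set Y) (u x : X) (w : Y) (kappa r s : R) :
  differentiable phi u -> 0 < kappa -> 0 < r -> 0 < s ->
  metrically_regular_balls phi u kappa r s -> bouligand_cone A (phi u) w ->
  (dist (x - u)%R (bouligand_cone (phi @^-1` A) u) <=
    (2 * (kappa + 1) * `|w - 'd phi u (x - u)|)%R%:E)%E.
Proof.
move=> du k0 r0 s0 reg Aw.
have k1 : 0 <= kappa + 1 by rewrite addr_ge0 ?ltW.
have [v Lv v_le] := linear_onto_of_half_approx (diff_continuous du) k1
  (diff_half_approx du k0 r0 s0 reg) (w - 'd phi u (x - u)).
have tangent : bouligand_cone (phi @^-1` A) u (x - u + v).
  by apply: (regular_tangent_preimage du k0 r0 s0 reg); rewrite linearD Lv addrC subrK.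
apply: le_trans (dist_le_norm _ tangent) _.
by rewrite lee_fin opprD addrA subrr add0r normrN.
Qed.

Lemma dist_tangent_preimage_contact (R : realType) (X : completeNormedModType R)
    (Y : normedModType R) (phi : X -> Y) (A : set Y) (u x : X) (kappa r s eta M : R) :
  differentiable phi u -> 0 < kappa -> 0 < r -> 0 < s ->
  metrically_regular_balls phi u kappa r s -> 0 < eta -> 0 < M -> x != u ->
  `|phi x - phi u| <= M * `|x - u| ->
  `|phi x - phi u - 'd phi u (x - u)| <= eta * `|x - u| ->
  (dist (phi x - phi u)%R (bouligand_cone A (phi u)) <= (eta / M * `|phi x - phi u|)%:E)%E ->
  (dist (x - u)%R (bouligand_cone (phi @^-1` A) u) <=
    (2 * (kappa + 1) * (3 * eta) * `|x - u|)%R%:E)%E.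
Proof.
move=> du k0 r0 s0 reg eta0 M0 xu lip strict contact.
have h0 : 0 < `|x - u| by rewrite normr_gt0 subr_eq0.
have [w Aw w_near] : exists2 w, bouligand_cone A (phi u) w &
    `|phi x - phi u - w| < eta / M * `|phi x - phi u| + eta * `|x - u|.
  by apply: dist_lt_ex; apply: le_lt_trans contact _; rewrite lte_fin ltrDl mulr_gt0.
apply: le_trans (dist_tangent_preimage_le x du k0 r0 s0 reg Aw) _.
have lip_eta : eta / M * `|phi x - phi u| <= eta * `|x - u|.
  rewrite mulrAC ler_pdivrMr // -mulrA (mulrC _ M).
  by apply: ler_wpM2l; [exact: ltW | exact: lip].
have := ler_distD (phi x - phi u) w ('d phi u (x - u)).
rewrite [`|w - (_ - _)|]distrC lee_fin -(mulrA (2 * _)) => w_dist.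
by apply: ler_wpM2l; [rewrite mulr_ge0 // addr_ge0 // ltW | lra].
Qed.

Unset Implicit Arguments.

Theorem proposition3p4 (R : realType) (X Y : completeNormedModType R)
    (phi : X -> Y) (A : set Y) (xbar : X) :
  cont_diff phi -> closed A -> A (phi xbar) ->
  shapiro_contact A (phi xbar) -> metrically_regular phi xbar ->
  shapiro_contact (phi @^-1` A) xbar.
Proof.
move=> phi_C1 _ _ contactA MR eps eps0.
have phic := differentiable_continuous (phi_C1.1 xbar).
have [kappa [r [s [k0 r0 s0 reg]]]] := metrically_regular_near phic MR.
have [eta eta0 eps_eta] : exists2 eta, 0 < eta & eps = 2 * (kappa + 1) * (3 * eta).
  exists (eps / (3 * (2 * (kappa + 1)))); first by rewrite !divr_gt0 ?mulr_gt0 ?addr_gt0.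
  by field; rewrite !lt0r_neq0 ?addr_gt0.
have [M M0 [dM dM0 lip]] := cont_diff_lipschitz_near xbar phi_C1.
have [dS dS0 strict] := cont_diff_strict xbar phi_C1 eta0.
have [dA dA0 contact] := contactA (eta / M) (divr_gt0 eta0 M0).
have [dc dc0 phi_near] := continuous_norm_ex phic dA0.
exists (Order.min r (Order.min dM (Order.min dS dc))); first by rewrite !lt_min r0 dM0 dS0.
move=> x u Cx Cu; rewrite !lt_min => /and4P[xr xM xS xc] /and4P[ur uM uS uc].
have [<-|xu] := eqVneq x u.
  rewrite subrr normr0 mulr0; apply: le_trans (dist_le_norm _ (bouligand_cone0 Cx)) _.
  by rewrite subrr normr0.
rewrite eps_eta; apply: dist_tangent_preimage_contact (phi_C1.1 u) k0 r0 s0 (reg _ ur)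
  eta0 M0 xu (lip _ _ xM uM) (strict _ _ xS uS) _.
exact: contact _ _ Cx Cu (phi_near _ xc) (phi_near _ uc).
Qed.
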